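(* Let $T>0$ and let $\Sigma=(\mathcal X,\mathcal Y,M_U,M_D,\phi,\pi,H)$ be a $T$-periodic control system with outputs. If $\Sigma$ satisfies the WIOS property from the input $u\in M_U$, then $\Sigma$ satisfies the UWIOS property from the input $u\in M_U$.
   Context: Notation: $\mathbb R^+=[0,\infty)$. $K^+$: positive continuous functions on $\mathbb R^+$. $\mathcal N$: continuous non-decreasing $\rho:\mathbb R^+\to\mathbb R^+$ with $\rho(0)=0$. $K$: positive definite, increasing, continuous functions $\mathbb R^+\to\mathbb R^+$. $KL$: continuous $\sigma:\mathbb R^+\times\mathbb R^+\to\mathbb R^+$ with $\sigma(\cdot,t)\in K$ for each $t$ and $\sigma(s,\cdot)$ non-increasing tending to $0$. For a subset $U$ of a normed linear space $\mathcal U$ with $0\in U$, $\mathcal M(U)$ is the set of locally bounded $u:\mathbb R^+\to U$, $u_0$ the zero input, $B_U[0,r]=\{v\in U:\|v\|_{\mathcal U}\le r\}$. Control system with outputs $\Sigma=(\mathcal X,\mathcal Y,M_U,M_D,\phi,\pi,H)$: a set $U\subseteq\mathcal U$ ($0\in U$) and $M_U\subseteq\mathcal M(U)$ containing $u_0$; a set $D$ and $M_D\subseteq\mathcal M(D)$; normed linear spaces $\mathcal X,\mathcal Y$; a continuous $H:\mathbb R^+\times\mathcal X\times U\to\mathcal Y$ mapping bounded sets into bounded sets; a set-valued map $(t_0,x_0,u,d)\mapsto\pi(t_0,x_0,u,d)\subseteq[t_0,\infty)$ with $t_0\in\pi(t_0,x_0,u,d)$; a map $\phi:A_\phi\to\mathcal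 X$, $A_\phi\subseteq\mathbb R^+\times\mathbb R^+\times\mathcal X\times M_U\times M_D$, with: (1) for each $(t_0,x_0,u,d)$ some $t>t_0$ has $[t_0,t]\times\{(t_0,x_0,u,d)\}\subseteq A_\phi$; (2) $\phi(t_0,t_0,x_0,u,d)=x_0$; (3) causality: if $(t,t_0,x_0,u,d)\in A_\phi$, $t>t_0$, and $(\tilde u,\tilde d)$ agrees with $(u,d)$ on $[t_0,t]$, then $(t,t_0,x_0,\tilde u,\tilde d)\in A_\phi$ with the same value of $\phi$; (4) weak semigroup property: there is $r>0$ such that for each $t\ge t_0$ with $(t,t_0,x_0,u,d)\in A_\phi$: (a) $(\tau,t_0,x_0,u,d)\in A_\phi$ for $\tau\in[t_0,t]$; (b) $\phi(t,\tau,\phi(\tau,t_0,x_0,u,d),u,d)=\phi(t,t_0,x_0,u,d)$ for $\tau\in[t_0,t]\cap\pi(t_0,x_0,u,d)$; (c) if $(t+r,t_0,x_0,u,d)\in A_\phi$ then $\pi(t_0,x_0,u,d)\cap[t,t+r]\ne\emptyset$; (d) for $\tau\in\pi(t_0,x_0,u,d)$ with $(\tau,t_0,x_0,u,d)\in A_\phi$, $\pi(\tau,\phi(\tau,t_0,x_0,u,d),u,d)=\pi(t_0,x_0,u,d)\cap[\tau,\infty)$. $T$-periodic: (a) $H(t+T,x,u)=H(t,x,u)$ for all $(t,x,u)$; (b) for every $(u,d)\in M_U\times M_D$ and integer $k$ there are $P_{kT}u\in M_U$, $P_{kT}d\in M_D$ with $(P_{kT}u)(t)=u(t+kT)$, $(P_{kT}d)(t)=d(t+kT)$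 for all $t+kT\ge0$; (c) for each $(t,t_0,x_0,u,d)\in A_\phi$ with $t\ge t_0$ and each integer $k$ with $t_0-kT\ge0$: $(t-kT,t_0-kT,x_0,P_{kT}u,P_{kT}d)\in A_\phi$, $\pi(t_0-kT,x_0,P_{kT}u,P_{kT}d)=\{\tau-kT:\tau\in\pi(t_0,x_0,u,d)\}$ and $\phi(t,t_0,x_0,u,d)=\phi(t-kT,t_0-kT,x_0,P_{kT}u,P_{kT}d)$. BIC property: for each $(t_0,x_0,u,d)$ there is $t_{\max}\in(t_0,+\infty]$ with $A_\phi=\bigcup[t_0,t_{\max})\times\{(t_0,x_0,u,d)\}$, and if $t_{\max}<\infty$ then $\phi(\cdot,t_0,x_0,u,d)$ is unbounded on $[t_0,t_{\max})$. RFC from the input $u$: BIC and for all $r,T'\ge0$, $\sup\{\|\phi(t_0+s,t_0,x_0,u,d)\|_{\mathcal X}: u\in\mathcal M(B_U[0,r])\cap M_U, s\in[0,T'],\|x_0\|_{\mathcal X}\le r,t_0\in[0,T'],d\in M_D\}<\infty$. Robust equilibrium point from the input $u$: $H(t,0,0)=0$; $\phi(t,t_0,0,u_0,d)=0$ for all $t\ge t_0$, $d$; and for all $\varepsilon>0$, $T',h\ge0$ there is $\eta>0$ such that $\|x\|+\sup_t\|u(t)\|<\eta$, $t_0\in[0,T']$, $\tau\in[t_0,t_0+h]$, $d\in M_D$ imply $(\tau,t_0,x,u,d)\in A_\phi$ and $\|\phi(\tau,t_0,x,u,d)\|<\varepsilon$. WIOS from the input $u\in M_U$: $\Sigma$ has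 BIC, is RFC from $u$, $0$ is a robust equilibrium point from $u$, and there exist $\sigma\in KL$, $\beta,\delta\in K^+$, $\gamma\in\mathcal N$ with $\|H(t,\phi(t,t_0,x_0,u,d),u(t))\|_{\mathcal Y}\le\sigma(\beta(t_0)\|x_0\|_{\mathcal X},t-t_0)+\sup_{t_0\le\tau\le t}\gamma(\delta(\tau)\|u(\tau)\|_{\mathcal U})$ for all $u\in M_U$, $(t_0,x_0,d)$, $t\ge t_0$. UWIOS: the same with $\beta\equiv1$. *)

From HB Require Import structures.
From mathcomp Require Import all_boot all_order all_algebra.
From mathcomp Require Import all_classical all_reals all_analysis.
Set Implicit Arguments. Unset Strict Implicit. Unset Printing Implicit Defensive.
Import Order.TTheory GRing.Theory Num.Theory.
Import numFieldNormedType.Exports.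
Local Open Scope classical_set_scope.
Local Open Scope ring_scope.

Section Classes.
Variable R : realType.

Definition nonneg : set R := [set t | 0 <= t].

Definition classKplus (f : R -> R) : Prop :=
  (forall t, 0 <= t -> 0 < f t) /\ {within nonneg, continuous f}.

Definition classN (rho : R -> R) : Prop :=
  {within nonneg, continuous rho} /\
  (forall s, 0 <= s -> 0 <= rho s) /\
  (forall s t, 0 <= s -> s <= t -> rho s <= rho t) /\
  rho 0 = 0.

Definition classK (a : R -> R) : Prop :=
  {within nonneg, continuous a} /\
  a 0 = 0 /\ (forall s, 0 < s -> 0 < a s) /\
  (forall s t, 0 <= s -> s < t -> a s < a t).

Definition classKL (sigma : R -> R -> R) : Prop :=
  {within [set p : R * R | 0 <= p.1 /\ 0 <= p.2],
     continuous (fun p : R * R => sigma p.1 p.2)} /\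
  (forall t, 0 <= t -> classK (fun s => sigma s t)) /\
  (forall s, 0 <= s ->
     (forall t1 t2, 0 <= t1 -> t1 <= t2 -> sigma s t2 <= sigma s t1) /\
     (sigma s t @[t --> +oo] --> 0)).
End Classes.

(* The data of a control system with outputs
   Sigma = (X, Y, M_U, M_D, phi, pi, H).
   Time functions are represented as maps R -> _ whose values on [0,+oo)
   are the relevant ones. *)
Record ctrl_sys (R : realType) (X Y UU : normedModType R) (D : Type) := CtrlSys {
  cs_U : set UU;
  cs_MU : set (R -> UU);
  cs_MD : set (R -> D);
  cs_Aphi : R -> R -> X -> (R -> UU) -> (R -> D) -> Prop;
  cs_phi : R -> R -> X -> (R -> UU) -> (R -> D) -> X;      (* phi (meaningful on A_phi) *)
  cs_pi : R -> X -> (R -> UU) -> (R -> D) -> set R;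
  cs_H : R -> X -> UU -> Y
}.

Section Props.
Variables (R : realType) (X Y UU : normedModType R) (D : Type).
Variable S : ctrl_sys X Y UU D.

Local Notation U := (cs_U S).
Local Notation MU := (cs_MU S).
Local Notation MD := (cs_MD S).
Local Notation Aphi := (cs_Aphi S).
Local Notation phi := (cs_phi S).
Local Notation pi := (cs_pi S).
Local Notation H := (cs_H S).

Definition zero_input : R -> UU := fun _ => 0.

Definition locally_bounded_in (u : R -> UU) : Prop :=
  (forall t, 0 <= t -> U (u t)) /\
  (forall T', exists M : R, forall t, 0 <= t -> t <= T' -> `|u t| <= M).

Definition is_control_system : Prop :=
  U 0 /\
  (forall u, MU u -> locally_bounded_in u) /\
  MU zero_input /\
  {within [set p : R * (X * UU) | 0 <= p.1 /\ U p.2.2],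
     continuous (fun p : R * (X * UU) => H p.1 p.2.1 p.2.2)} /\
  (forall r : R, exists M : R, forall t x v,
      0 <= t -> t <= r -> `|x| <= r -> U v -> `|v| <= r -> `|H t x v| <= M) /\
  (forall t t0 x0 u d, Aphi t t0 x0 u d -> [/\ 0 <= t, 0 <= t0, MU u & MD d]) /\
  (forall t0 x0 u d, 0 <= t0 -> MU u -> MD d ->
      pi t0 x0 u d `<=` [set t | t0 <= t] /\ pi t0 x0 u d t0) /\
  (forall t0 x0 u d, 0 <= t0 -> MU u -> MD d ->
      exists t, t0 < t /\ forall s, t0 <= s -> s <= t -> Aphi s t0 x0 u d) /\
  (forall t0 x0 u d, 0 <= t0 -> MU u -> MD d -> phi t0 t0 x0 u d = x0) /\
  (forall t t0 x0 u d u' d', Aphi t t0 x0 u d -> t0 < t -> MU u' -> MD d' ->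
      (forall s, t0 <= s -> s <= t -> u' s = u s /\ d' s = d s) ->
      Aphi t t0 x0 u' d' /\ phi t t0 x0 u' d' = phi t t0 x0 u d) /\
  (exists r : R, 0 < r /\
    forall t t0 x0 u d, t0 <= t -> Aphi t t0 x0 u d ->
      (forall tau, t0 <= tau -> tau <= t -> Aphi tau t0 x0 u d) /\
      (forall tau, t0 <= tau -> tau <= t -> pi t0 x0 u d tau ->
         Aphi t tau (phi tau t0 x0 u d) u d /\
         phi t tau (phi tau t0 x0 u d) u d = phi t t0 x0 u d) /\
      (Aphi (t + r) t0 x0 u d ->
         exists tau, pi t0 x0 u d tau /\ t <= tau /\ tau <= t + r) /\
      (forall tau, pi t0 x0 u d tau -> Aphi tau t0 x0 u d ->
         pi tau (phi tau t0 x0 u d) u d = pi t0 x0 u d `&` [set s | tau <= s])).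

Definition T_periodic (T : R) : Prop :=
  (forall t x v, 0 <= t -> U v -> H (t + T) x v = H t x v) /\
  exists (PU : int -> (R -> UU) -> (R -> UU)) (PD : int -> (R -> D) -> (R -> D)),
    (forall u d (k : int), MU u -> MD d ->
       MU (PU k u) /\ MD (PD k d) /\
       forall t, 0 <= t -> 0 <= t + k%:~R * T ->
         PU k u t = u (t + k%:~R * T) /\ PD k d t = d (t + k%:~R * T)) /\
    (forall t t0 x0 u d (k : int), Aphi t t0 x0 u d -> t0 <= t ->
       0 <= t0 - k%:~R * T ->
       Aphi (t - k%:~R * T) (t0 - k%:~R * T) x0 (PU k u) (PD k d) /\
       pi (t0 - k%:~R * T) x0 (PU k u) (PD k d)
         = [set tau - k%:~R * T | tau in pi t0 x0 u d] /\
       phi t t0 x0 u d = phi (t - k%:~R * T) (t0 - k%:~R * T) x0 (PU k u) (PD k d)).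

Definition BIC : Prop :=
  forall t0 x0 u d, 0 <= t0 -> MU u -> MD d ->
    exists tmax : \bar R, (t0%:E < tmax)%E /\
      (forall t, Aphi t t0 x0 u d <-> (t0 <= t /\ (t%:E < tmax)%E)) /\
      ((tmax < +oo)%E ->
         ~ (exists M : R, forall t, t0 <= t -> (t%:E < tmax)%E ->
              `|phi t t0 x0 u d| <= M)).

Definition RFC : Prop :=
  BIC /\
  forall r T' : R, 0 <= r -> 0 <= T' ->
    exists M : R, forall u s x0 t0 d,
      MU u -> (forall t, 0 <= t -> `|u t| <= r) ->
      0 <= s -> s <= T' -> `|x0| <= r -> 0 <= t0 -> t0 <= T' -> MD d ->
      Aphi (t0 + s) t0 x0 u d -> `|phi (t0 + s) t0 x0 u d| <= M.

Definition robust_equilibrium : Prop :=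
  (forall t, 0 <= t -> H t 0 0 = 0) /\
  (forall t t0 d, 0 <= t0 -> t0 <= t -> MD d ->
      Aphi t t0 0 zero_input d /\ phi t t0 0 zero_input d = 0) /\
  (forall eps T' h : R, 0 < eps -> 0 <= T' -> 0 <= h ->
     exists eta : R, 0 < eta /\
       forall x u t0 tau d,
         MU u ->
         (* ||x|| + sup_{t>=0} ||u(t)|| < eta *)
         (exists Mu : R, (forall t, 0 <= t -> `|u t| <= Mu) /\ `|x| + Mu < eta) ->
         0 <= t0 -> t0 <= T' -> t0 <= tau -> tau <= t0 + h -> MD d ->
         Aphi tau t0 x u d /\ `|phi tau t0 x u d| < eps).

Definition wios_estimate (sigma : R -> R -> R) (beta delta gamma : R -> R) : Prop :=
  forall u t0 x0 d t, MU u -> 0 <= t0 -> MD d -> t0 <= t -> Aphi t t0 x0 u d ->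
    ((`|H t (phi t t0 x0 u d) (u t)|)%:E <=
      (sigma (beta t0 * `|x0|) (t - t0))%:E +
      ereal_sup [set (gamma (delta tau * `|u tau|))%:E | tau in [set tau : R | (t0 <= tau <= t)%R]])%E.

Definition WIOS : Prop :=
  BIC /\ RFC /\ robust_equilibrium /\
  exists sigma beta delta gamma,
    classKL sigma /\ classKplus beta /\ classKplus delta /\ classN gamma /\
    wios_estimate sigma beta delta gamma.

Definition UWIOS : Prop :=
  BIC /\ RFC /\ robust_equilibrium /\
  exists sigma delta gamma,
    classKL sigma /\ classKplus delta /\ classN gamma /\
    wios_estimate sigma (fun _ => 1) delta gamma.

End Props.

(* By T-periodicity, a trajectory starting at t0 has the same outputs as the
   trajectory of the shifted system starting at t0 - nT in [0, T), n the integer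
   part of t0 / T.  On [0, T] the gain beta is bounded by some b > 0, so
   sigma (b s) t absorbs the dependence on the initial time.  The shift moves the
   input times tau to tau + nT; replacing delta by its running maximum, which is
   nondecreasing and still positive and continuous, makes the input term
   insensitive to this shift. *)

From mathcomp Require Import all_boot all_order all_algebra.
From mathcomp Require Import all_classical all_reals all_analysis.
From mathcomp Require Import ring lra.
Import Order.TTheory GRing.Theory Num.Theory.
Import numFieldNormedType.Exports.
Local Open Scope classical_set_scope.
Local Open Scope ring_scope.
Set Implicit Arguments. Unset Strict Implicit.

Lemma within_continuousP (R : realType) (A : set R) (f : R -> R) :
  {within A, continuous f} <-> forall x, A x -> forall e, 0 < e ->
    exists2 d, 0 < d & forall y, A y -> `|x - y| < d -> `|f x - f y| < e.
Proof.
rewrite subspace_continuousP; split => [cf x Ax e e0|cf x Ax].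
  move/cvgrPdist_lt: (cf x Ax) => /(_ e e0).
  rewrite /= /within /prop_near1 /= => /nbhs_ballP[d d0 fd].
  by exists d => // y Ay xy; exact: fd.
apply/cvgrPdist_lt => e e0; have [d d0 fd] := cf x Ax e e0.
by rewrite /= /within /prop_near1 /=; apply/nbhs_ballP; exists d => // y /= xy Ay; exact: fd.
Qed.

Lemma continuous_within_comp (T U V : topologicalType) (A : set T) (B : set U)
    (f : T -> U) (g : U -> V) :
  (forall a, A a -> B (f a)) -> {within A, continuous f} ->
  {within B, continuous g} -> {within A, continuous (g \o f)}.
Proof.
move=> AB /subspace_continuousP cf /subspace_continuousP cg.
apply/subspace_continuousP => x Ax.
have cfB : f @ within A (nbhs x) --> within B (nbhs (f x)).
  move=> P BP; have := cf x Ax (fun z => B z -> P z) BP.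
  by rewrite /within /= !nbhs_simpl /=; apply: filterS => y Py Ay; exact: Py Ay (AB _ Ay).
exact: cvg_comp cfB (cg _ (AB _ Ax)).
Qed.

Section RunningMax.
Variables (R : realType) (d : R -> R).
Hypothesis cd : {within nonneg (R:=R), continuous d}.

Definition runmax (t : R) : R := sup [set d r | r in `[0, t]].

Lemma runmax_ge r t : 0 <= r <= t -> d r <= runmax t.
Proof.
move=> /andP[r0 rt]; have t0 := le_trans r0 rt.
have cdt : {within `[0, t], continuous d}.
  by apply: continuous_subspaceW cd => s /=; rewrite in_itv /= => /andP[].
have [c _ dc] := EVT_max t0 cdt.
apply: ub_le_sup; last by exists r => //=; rewrite in_itv /= r0 rt.
by exists (d c) => _ [s st <-]; exact: dc.
Qed.

Lemma runmax_le t c : 0 <= t -> (forall r, 0 <= r <= t -> d r <= c) -> runmax t <= c.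
Proof.
move=> t0 dc; apply: ge_sup; first by exists (d 0), 0 => //=; rewrite in_itv /= lexx t0.
by move=> _ [r /= rt <-]; apply: dc; rewrite in_itv /= in rt.
Qed.

Lemma le_runmax a b : 0 <= a -> a <= b -> runmax a <= runmax b.
Proof.
move=> a0 ab; apply: runmax_le => // r /andP[r0 ra].
by apply: runmax_ge; rewrite r0 (le_trans ra ab).
Qed.

Lemma runmax_le_add a b e : 0 <= a -> a <= b ->
  (forall r, a <= r <= b -> d r <= d a + e) -> runmax b <= runmax a + e.
Proof.
move=> a0 ab dae; apply: runmax_le => [|r /andP[r0 rb]]; first exact: le_trans ab.
have daa : d a <= runmax a by apply: runmax_ge; rewrite a0 lexx.
have [ra|ar] := leP r a; last by have := dae r; rewrite rb (ltW ar) => /(_ isT); lra.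
have := runmax_ge (t := a) (r := r); rewrite r0 ra => /(_ isT).
have e0 : 0 <= e by have := dae a; rewrite lexx ab => /(_ isT); lra.
lra.
Qed.

Lemma runmax_continuous : {within nonneg (R:=R), continuous runmax}.
Proof.
move/within_continuousP: cd => dC; apply/within_continuousP => x x0 e e0.
have e4 : 0 < e / 4 by rewrite divr_gt0.
have [eta eta0 dx] := dC x x0 (e / 4) e4.
have near_le a r : 0 <= a -> 0 <= r -> `|x - a| < eta -> `|x - r| < eta ->
    d r <= d a + e / 2.
  move=> a0 r0 /(dx a a0) + /(dx r r0); rewrite !ltr_norml; lra.
have step a b : 0 <= a -> a <= b -> `|x - a| < eta -> `|x - b| < eta ->
    `|runmax a - runmax b| < e.
  move=> a0 ab xa xb; rewrite distrC ger0_norm ?subr_ge0 ?le_runmax //.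
  suff : runmax b <= runmax a + e / 2 by lra.
  apply: runmax_le_add => // r /andP[ar rb]; apply: near_le => //.
    exact: le_trans ar.
  by move: xa xb; rewrite !ltr_norml; lra.
exists eta => // y y0 xy; have xx : `|x - x| < eta by rewrite subrr normr0.
by case: (leP x y) => [xley|/ltW ylex]; [|rewrite distrC]; apply: step.
Qed.

End RunningMax.

Lemma classKplus_runmax (R : realType) (d : R -> R) :
  classKplus d -> classKplus (runmax d).
Proof.
move=> [dpos cd]; split; last exact: runmax_continuous.
by move=> t t0; apply: lt_le_trans (dpos t t0) _; apply: runmax_ge; rewrite ?t0 ?lexx.
Qed.

Section GainClasses.
Variable R : realType.

Lemma classK_le (a : R -> R) x y : classK a -> 0 <= x -> x <= y -> a x <= a y.
Proof.
move=> [_ [_ [_ a_inc]]] x0; rewrite le_eqVlt => /predU1P[-> //|xy].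
exact/ltW/a_inc.
Qed.

Lemma classN_le (g : R -> R) x y : classN g -> 0 <= x -> x <= y -> g x <= g y.
Proof. by move=> [_ [_ [g_mono _]]]; apply: g_mono. Qed.

Lemma classKplus_bounded (beta : R -> R) T : classKplus beta -> 0 <= T ->
  exists2 b, 0 < b & forall t, 0 <= t <= T -> beta t <= b.
Proof.
move=> [bpos cb] T0.
have cbT : {within `[0, T], continuous beta}.
  by apply: continuous_subspaceW cb => t /=; rewrite in_itv /= => /andP[].
have [c cT bc] := EVT_max T0 cbT.
exists (beta c); first by apply: bpos; rewrite in_itv /= in cT; case/andP: cT.
by move=> t tT; apply: bc; rewrite in_itv.
Qed.

Lemma classKL_scale (sigma : R -> R -> R) b : 0 < b -> classKL sigma ->
  classKL (fun s t => sigma (b * s) t).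
Proof.
move=> b0 [sc [sK sdec]]; have b0' := ltW b0.
have bs0 s : 0 <= s -> 0 <= b * s by exact: mulr_ge0.
split; [|split].
- pose Q := [set p : R * R | 0 <= p.1 /\ 0 <= p.2].
  have := @continuous_within_comp _ _ _ Q Q (fun p => (b * p.1, p.2))
    (fun p => sigma p.1 p.2); apply => //.
    by move=> p [p1 p2]; split => //; exact: bs0.
  apply: continuous_subspaceT => p.
  apply: (cvg_pair (G := nbhs (b * p.1)) (H := nbhs p.2)); last exact: cvg_snd.
  by apply: cvgMr; exact: cvg_fst.
- move=> t t0; have [c1 [c2 [c3 c4]]] := sK t t0; split; [|split; [|split]].
  + have := @continuous_within_comp _ _ _ (@nonneg R) (@nonneg R) ( *%R b) (sigma^~ t) bs0.
    apply => //.
    by apply: continuous_subspaceT => s; apply: cvgMr; exact: cvg_id.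
  + by rewrite /= mulr0.
  + by move=> s s0 /=; apply: c3; exact: mulr_gt0.
  + by move=> s s' s0 ss' /=; apply: c4; [exact: bs0|rewrite ltr_pM2l].
- by move=> s s0; apply: sdec; exact: bs0.
Qed.

End GainClasses.

Lemma exists_period_index (R : realType) (T t : R) : 0 < T -> 0 <= t ->
  exists n : nat, n%:R * T <= t < n%:R * T + T.
Proof.
move=> T0 t0; have /andP[tn nt] := truncn_itv (divr_ge0 t0 (ltW T0)).
exists (Num.truncn (t / T)); rewrite -ler_pdivlMr // tn /=.
by rewrite -[X in _ + X]mul1r -mulrDl -ltr_pdivrMr // -mulrSr.
Qed.

Section PeriodicShift.
Variables (R : realType) (X Y UU : normedModType R) (D : Type).
Variables (S : ctrl_sys X Y UU D) (T : R).
Variables (PU : int -> (R -> UU) -> R -> UU) (PD : int -> (R -> D) -> R -> D).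

Local Notation U := (cs_U S).
Local Notation MU := (cs_MU S).
Local Notation MD := (cs_MD S).
Local Notation Aphi := (cs_Aphi S).
Local Notation phi := (cs_phi S).
Local Notation H := (cs_H S).

Hypothesis T_gt0 : 0 < T.
Hypothesis MU_valued : forall u, MU u -> forall t, 0 <= t -> U (u t).
Hypothesis H_periodic : forall t x v, 0 <= t -> U v -> H (t + T) x v = H t x v.
Hypothesis PU_PD_shift : forall u d (k : int), MU u -> MD d ->
  MU (PU k u) /\ MD (PD k d) /\
  forall t, 0 <= t -> 0 <= t + k%:~R * T ->
    PU k u t = u (t + k%:~R * T) /\ PD k d t = d (t + k%:~R * T).
Hypothesis phi_shift : forall t t0 x0 u d (k : int), Aphi t t0 x0 u d -> t0 <= t ->
  0 <= t0 - k%:~R * T ->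
  Aphi (t - k%:~R * T) (t0 - k%:~R * T) x0 (PU k u) (PD k d) /\
  cs_pi S (t0 - k%:~R * T) x0 (PU k u) (PD k d)
    = [set tau - k%:~R * T | tau in cs_pi S t0 x0 u d] /\
  phi t t0 x0 u d = phi (t - k%:~R * T) (t0 - k%:~R * T) x0 (PU k u) (PD k d).

Lemma H_periodicn (n : nat) t x v : 0 <= t -> U v -> H (t + n%:R * T) x v = H t x v.
Proof.
elim: n t => [|n IHn] t t0 Uv; first by rewrite mul0r addr0.
rewrite mulrSr mulrDl mul1r addrA H_periodic ?IHn //.
by rewrite addr_ge0 // mulr_ge0 // ltW.
Qed.

Lemma PU_shift_nat (n : nat) u d t : MU u -> MD d -> 0 <= t ->
  PU n u t = u (t + n%:R * T).
Proof.
move=> MUu MDd t0; have [_ [_ shift]] := PU_PD_shift n MUu MDd.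
by have [] := shift t t0; first by rewrite addr_ge0 // mulr_ge0 // ltW.
Qed.

Lemma output_shift (n : nat) u d t0 x0 t : MU u -> MD d -> t0 <= t ->
    n%:R * T <= t0 -> Aphi t t0 x0 u d ->
  Aphi (t - n%:R * T) (t0 - n%:R * T) x0 (PU n u) (PD n d) /\
  H t (phi t t0 x0 u d) (u t) =
    H (t - n%:R * T) (phi (t - n%:R * T) (t0 - n%:R * T) x0 (PU n u) (PD n d))
      (PU n u (t - n%:R * T)).
Proof.
move=> MUu MDd t0t nt0 A; have s0 : 0 <= t0 - n%:R * T by rewrite subr_ge0.
have [A' [_ ->]] := phi_shift (k := n) A t0t s0; split => //.
have ts0 : 0 <= t - n%:R * T by apply: le_trans s0 _; rewrite lerD2r.
have -> : H t = H (t - n%:R * T + n%:R * T) by rewrite subrK.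
rewrite (PU_shift_nat _ MUu MDd ts0) H_periodicn ?subrK //.
apply: (MU_valued MUu); apply: le_trans t0t; apply: le_trans nt0.
by rewrite mulr_ge0 // ltW.
Qed.

Lemma sup_shift_le (delta gamma : R -> R) (n : nat) u d (t0 t : R) :
    classKplus delta -> classN gamma -> MU u -> MD d -> n%:R * T <= t0 ->
  (ereal_sup [set (gamma (delta tau * `|PU n u tau|))%:E
               | tau in [set tau | (t0 - n%:R * T <= tau <= t - n%:R * T)%R]]
   <= ereal_sup [set (gamma (runmax delta tau * `|u tau|))%:E
               | tau in [set tau | (t0 <= tau <= t)%R]])%E.
Proof.
move=> [dpos cd] gN MUu MDd nt0; apply: ge_ereal_sup => _ [tau /andP[t0tau taut] <-].
have tau0 : 0 <= tau by apply: le_trans t0tau; rewrite subr_ge0.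
apply: le_ereal_sup_tmp; exists (gamma (runmax delta (tau + n%:R * T) *
                                   `|u (tau + n%:R * T)|))%:E.
  by exists (tau + n%:R * T) => //=; rewrite -lerBlDr t0tau -lerBrDr.
rewrite (PU_shift_nat _ MUu MDd tau0) lee_fin; apply: (classN_le gN).
  by rewrite mulr_ge0 // ltW // dpos.
by rewrite ler_wpM2r // runmax_ge // tau0 lerDl mulr_ge0 // ltW.
Qed.

Lemma wios_estimate_uniform sigma beta delta gamma b :
    classKL sigma -> classKplus beta -> classKplus delta -> classN gamma ->
    (forall t, 0 <= t <= T -> beta t <= b) ->
    wios_estimate S sigma beta delta gamma ->
  wios_estimate S (fun s t => sigma (b * s) t) (fun _ => 1) (runmax delta) gamma.
Proof.
move=> [_ [sK _]] [bpos _] dK gN beta_le est u t0 x0 d t MUu t00 MDd t0t A.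
have [n /andP[nt0 t0n]] := exists_period_index T_gt0 t00.
have s0 : 0 <= t0 - n%:R * T by rewrite subr_ge0.
have [MU' [MD' _]] := PU_PD_shift n MUu MDd.
have [A' ->] := output_shift MUu MDd t0t nt0 A.
apply: le_trans (est _ _ _ _ _ MU' s0 MD' _ A') _; first by rewrite lerD2r.
have -> : t - n%:R * T - (t0 - n%:R * T) = t - t0 by ring.
apply: leeD; last exact: sup_shift_le dK gN MUu MDd nt0.
rewrite lee_fin mul1r; apply: (classK_le (sK _ _)); first by rewrite subr_ge0.
  by rewrite mulr_ge0 // ltW // bpos.
by rewrite ler_wpM2r // beta_le // s0 /= lerBlDl ltW.
Qed.

End PeriodicShift.

Unset Implicit Arguments.

Theorem lemma2p18 (R : realType) (X Y UU : normedModType R) (D : Type)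
  (S : ctrl_sys X Y UU D) (T : R) :
  0 < T -> is_control_system S -> T_periodic S T -> WIOS S -> UWIOS S.
Proof.
move=> T_gt0 [_ [MU_lb _]] [H_per [PU [PD [PU_PD_shift phi_shift]]]].
move=> [bic [rfc [req [sigma [beta [delta [gamma [sKL [bK [dK [gN est]]]]]]]]]]].
have [b b_gt0 beta_le] := classKplus_bounded bK (ltW T_gt0).
have MU_valued u : cs_MU S u -> forall t, 0 <= t -> cs_U S (u t).
  by move=> /MU_lb[].
do 3 (split => //).
exists (fun s t => sigma (b * s) t), (runmax delta), gamma.
split; first exact: classKL_scale.
split; first exact: classKplus_runmax.
split => //.
exact: (wios_estimate_uniform (PU := PU) (PD := PD) T_gt0 MU_valued H_per
  PU_PD_shift phi_shift sKL bK dK gN beta_le est).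
Qed.
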